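(* Let $S$ be a topological semigroup and $e\in S$ a balanced open right unit of $S$. Then $S$ has open left shifts and open right shifts. If moreover $S$ is a $T_1$-space, then $e$ is an open left unit of $S$ (in particular $e$ is a unit and $S$ is a balanced topological monoid).
   Context: A topological semigroup is a topological space with a continuous associative multiplication. $e$ is a right unit if $xe=x$ for all $x\in S$, a left unit if $ex=x$ for all $x$, a unit if both. A right unit $e$ is an open right unit if $xU$ is a neighborhood of $x$ for every neighborhood $U$ of $e$ and every $x\in S$; a left unit is an open left unit if $Ux$ is a neighborhood of $x$ for every such $U$ and $x$. A subset $U\subset S$ is invariant if $xU=Ux$ for all $x\in S$. A point $e$ is balanced if it has a neighborhood base consisting of open invariant neighborhoods; a balanced open right unit is an open right unit which is a balanced point. A topological monoid (semigroup with unit) is balanced if its unit is a balanced point. $S$ has open left (right) shifts if $x\mapsto ax$ (resp. $x\mapsto xa$) is an open map for every $a\in S$. *)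

From HB Require Import structures.
From mathcomp Require Import all_boot all_order.
From mathcomp Require Import all_classical all_reals all_analysis.
Set Implicit Arguments. Unset Strict Implicit. Unset Printing Implicit Defensive.
Local Open Scope classical_set_scope.

Definition topological_semigroup (T : topologicalType) (mul : T -> T -> T) :=
  (forall x y z, mul x (mul y z) = mul (mul x y) z) /\
  continuous (fun p : T * T => mul p.1 p.2).

Definition right_unit (T : Type) (mul : T -> T -> T) (e : T) :=
  forall x, mul x e = x.
Definition left_unit (T : Type) (mul : T -> T -> T) (e : T) :=
  forall x, mul e x = x.

Definition lmulset (T : Type) (mul : T -> T -> T) (x : T) (U : set T) :=
  [set mul x u | u in U].
Definition rmulset (T : Type) (mul : T -> T -> T) (U : set T) (x : T) :=
  [set mul u x | u in U].

Definition open_right_unit (T : topologicalType) (mul : T -> T -> T) (e : T) :=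
  right_unit mul e /\
  forall U x, nbhs e U -> nbhs x (lmulset mul x U).

Definition open_left_unit (T : topologicalType) (mul : T -> T -> T) (e : T) :=
  left_unit mul e /\
  forall U x, nbhs e U -> nbhs x (rmulset mul U x).

Definition invariant (T : Type) (mul : T -> T -> T) (U : set T) :=
  forall x, lmulset mul x U = rmulset mul U x.

Definition balanced_point (T : topologicalType) (mul : T -> T -> T) (e : T) :=
  forall U, nbhs e U ->
    exists V : set T, [/\ open V, V e, invariant mul V & V `<=` U].

Definition balanced_open_right_unit (T : topologicalType) (mul : T -> T -> T)
  (e : T) := open_right_unit mul e /\ balanced_point mul e.

Definition open_map (T : topologicalType) (f : T -> T) :=
  forall U : set T, open U -> open (f @` U).

Definition open_left_shifts (T : topologicalType) (mul : T -> T -> T) :=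
  forall a, open_map (fun x => mul a x).
Definition open_right_shifts (T : topologicalType) (mul : T -> T -> T) :=
  forall a, open_map (fun x => mul x a).

From Pilot Require Import Defs.
From mathcomp Require Import all_boot all_order.
From mathcomp Require Import all_classical all_reals all_analysis.
Set Implicit Arguments.
Unset Strict Implicit.
Local Open Scope classical_set_scope.

(** Continuity at [(w, e)] and [w e = w] put [w V] inside any neighbourhood
    [W] of [w], for some open invariant neighbourhood [V] of [e]; as [e] is an
    open right unit, [(f w) V] is a neighbourhood of [f w].  For a shift [f]
    associativity and invariance give [f (w V) = (f w) V] (for [f = _ * a]:
    [(w V) a = w (V a) = w (a V) = (w a) V]), so [f W] is a neighbourhood of
    each of its points.  In a T1 space, [x = x e] lies in [x V = V x], so
    [x = v x] with [v] arbitrarily close to [e]; by continuity every open set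
    containing [e x] contains [x], whence [e x = x]. *)

Lemma lmulset_nbhs_sub (T : topologicalType) (mul : T -> T -> T) e w (W : set T) :
  continuous (fun p : T * T => mul p.1 p.2) -> nbhs (mul w e) W ->
  exists2 U, nbhs e U & lmulset mul w U `<=` W.
Proof.
move=> mul_cont /(mul_cont (w, e)) [[P Q] /= [Pw Qe] PQW].
by exists Q => // _ [u Qu <-]; apply: (PQW (w, u)); split; first exact: nbhs_singleton.
Qed.

Lemma rmulset_nbhs_sub (T : topologicalType) (mul : T -> T -> T) e x (W : set T) :
  continuous (fun p : T * T => mul p.1 p.2) -> nbhs (mul e x) W ->
  exists2 U, nbhs e U & rmulset mul U x `<=` W.
Proof.
move=> mul_cont /(mul_cont (e, x)) [[P Q] /= [Pe Qx] PQW].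
by exists P => // _ [u Pu <-]; apply: (PQW (u, x)); split; last exact: nbhs_singleton.
Qed.

Section BalancedOpenRightUnit.
Variables (T : topologicalType) (mul : T -> T -> T) (e : T).
Hypothesis mulA : forall x y z, mul x (mul y z) = mul (mul x y) z.
Hypothesis mul_cont : continuous (fun p : T * T => mul p.1 p.2).
Hypothesis ore : open_right_unit mul e.
Hypothesis bal : balanced_point mul e.

Lemma lmulset_open_nbhs x (V : set T) :
  open V -> V e -> nbhs x (lmulset mul x V).
Proof. by move=> oV Ve; apply: ore.2; apply: open_nbhs_nbhs. Qed.

Lemma invariant_lmulset_sub w (W : set T) : nbhs w W ->
  exists V : set T, [/\ open V, V e, Defs.invariant mul V & lmulset mul w V `<=` W].
Proof.
rewrite -{1}(ore.1 w) => /(lmulset_nbhs_sub mul_cont) [U Ue wUW].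
have [V [oV Ve iV VU]] := bal Ue.
by exists V; split => // _ [v Vv <-]; apply: wUW; exists v => //; apply: VU.
Qed.

Lemma open_map_shift (f : T -> T) :
  (forall w (V : set T), Defs.invariant mul V ->
     f @` lmulset mul w V = lmulset mul (f w) V) ->
  open_map f.
Proof.
move=> f_lmulset W oW; rewrite openE => _ [w Ww <-].
have [V [oV Ve iV wVW]] := invariant_lmulset_sub (open_nbhs_nbhs (conj oW Ww)).
apply: filterS (lmulset_open_nbhs (f w) oV Ve).
by rewrite -f_lmulset //; apply: image_subset.
Qed.

Lemma lmulsetA a w (V : set T) :
  (fun x => mul a x) @` lmulset mul w V = lmulset mul (mul a w) V.
Proof.
rewrite /lmulset; apply/seteqP; split=> [_ [_ [v Vv <-] <-]|_ [v Vv <-]];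
  by [exists v; rewrite ?mulA | exists (mul w v); [exists v|rewrite mulA]].
Qed.

Lemma right_shift_lmulset w a (V : set T) : Defs.invariant mul V ->
  (fun x => mul x a) @` lmulset mul w V = lmulset mul (mul w a) V.
Proof.
move=> iV; apply/seteqP; split=> [_ [_ [v Vv <-] <-]|_ [u Vu <-]].
- have [u Vu uv] : lmulset mul a V (mul v a) by rewrite iV; exists v.
  by exists u; rewrite // -mulA uv mulA.
- have [v Vv vu] : rmulset mul V a (mul a u) by rewrite -iV; exists u.
  by exists (mul w v); [exists v | rewrite -mulA vu mulA].
Qed.

Lemma open_left_shifts_of_balanced : open_left_shifts mul.
Proof. by move=> a; apply: open_map_shift => w V _; apply: lmulsetA. Qed.

Lemma open_right_shifts_of_balanced : open_right_shifts mul.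
Proof. by move=> a; apply: open_map_shift => w V; apply: right_shift_lmulset. Qed.

Lemma open_left_unit_nbhs U x : nbhs e U -> nbhs x (rmulset mul U x).
Proof.
move=> /bal [V [oV Ve iV VU]]; apply: filterS (lmulset_open_nbhs x oV Ve).
by rewrite iV; apply: image_subset.
Qed.

Lemma left_unit_of_accessible : accessible_space T -> left_unit mul e.
Proof.
move=> T1 x; apply/eqP/negPn/negP => /T1 [A [oA /set_mem Aex /set_mem Ax]].
have [U Ue UxA] := rmulset_nbhs_sub mul_cont (open_nbhs_nbhs (conj oA Aex)).
have [V [_ Ve iV VU]] := bal Ue.
have [v Vv vx] : rmulset mul V x x by rewrite -iV; exists e; rewrite ?ore.1.
by apply: Ax; rewrite -vx; apply: UxA; exists v => //; apply: VU.
Qed.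

End BalancedOpenRightUnit.

Theorem proposition5p7 (T : topologicalType) (mul : T -> T -> T) (e : T) :
  topological_semigroup mul ->
  balanced_open_right_unit mul e ->
  [/\ open_left_shifts mul, open_right_shifts mul &
      (accessible_space T ->
         [/\ open_left_unit mul e, left_unit mul e /\ right_unit mul e
           & balanced_point mul e])].
Proof.
move=> [mulA mul_cont] [ore bal]; split.
- exact: open_left_shifts_of_balanced mulA mul_cont ore bal.
- exact: open_right_shifts_of_balanced mulA mul_cont ore bal.
- move=> T1; have lu := left_unit_of_accessible mul_cont ore bal T1.
  split=> //; first by split=> // U x; exact: (open_left_unit_nbhs ore bal x).
  by split; [exact: lu | exact: ore.1].
Qed.
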